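(* Let $\alpha\in(0,\tfrac12)$ and $0<X_B\le X_A$. If player $B$ pre-commits any $p\in[0,X_B]$ to battlefield $b=2$, then $$u_B(p)<\min\{\pi_B(\sigma):\sigma\in(0,\infty),\ S(\sigma)=0\}.$$
   Context: Two-battlefield asymmetric setting $\mathrm{GGL}(X_A,X_B,\alpha)$: valuations $v_{A,1}=\alpha$, $v_{A,2}=1-\alpha$, $v_{B,1}=1-\alpha$, $v_{B,2}=\alpha$, budgets $X_A,X_B>0$. Define, for $x,y\ge0$, $L(x,y)=\frac{x}{2y}$ if $0\le x\le y$, $y>0$; $L(x,y)=1-\frac{y}{2x}$ if $x>y\ge0$; $L(0,0)=\tfrac12$. Let $c=\frac{(1-\alpha)^2}{\alpha}+\frac{\alpha^2}{1-\alpha}$, $r=X_A/X_B$, and $S:(0,\infty)\to\mathbb R$: $S(\sigma)=\sigma^2(c\sigma-r)$ on $(0,\frac{\alpha}{1-\alpha})$; $S(\sigma)=\frac{\alpha^2}{1-\alpha}(\sigma^3-r)+\alpha\sigma(1-r\sigma)$ on $[\frac{\alpha}{1-\alpha},\frac{1-\alpha}{\alpha})$; $S(\sigma)=\sigma-rc$ on $[\frac{1-\alpha}{\alpha},\infty)$. The equilibrium payoff of $B$ associated with a zero $\sigma$ of $S$ is $\pi_B(\sigma)=1-\frac{\sigma}{2}$ if $\sigma\in(0,\frac{\alpha}{1-\alpha})$; $\pi_B(\sigma)=1-\alpha-\frac{\alpha\sigma}{2}+\frac{\alpha^2}{2\sigma(1-\alpha)}$ if $\sigma\in[\frac{\alpha}{1-\alpha},\frac{1-\alpha}{\alpha})$;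 $\pi_B(\sigma)=\frac{c}{2\sigma}$ if $\sigma\ge\frac{1-\alpha}{\alpha}$. Pre-commitment: $B$ places $p\in[0,X_B]$ on one battlefield $b\in\{1,2\}$. Then $u_A^{M}(p)=v_{A,b}+(1-v_{A,b})L(X_A-p,X_B-p)$ (for $p\le X_A$) and $u_A^{W}(p)=(1-v_{A,b})L(X_A,X_B-p)$. Player $A$'s response is $\mathtt A_b(p)=\mathtt M$ if $p\le X_A$ and $u_A^M(p)>u_A^W(p)$, and $\mathtt A_b(p)=\mathtt W$ otherwise. Player $B$'s payoff is $u_B(p)=(1-v_{B,b})L(X_B-p,X_A-p)$ if $\mathtt A_b(p)=\mathtt M$, and $u_B(p)=v_{B,b}+(1-v_{B,b})L(X_B-p,X_A)$ if $\mathtt A_b(p)=\mathtt W$. *)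

From Stdlib Require Import Reals Lra.
Open Scope R_scope.

(* L(x,y) for x,y >= 0 (values outside that domain are irrelevant). *)
Definition L (x y : R) : R :=
  if Rle_dec x y then
    (if Rlt_dec 0 y then x / (2 * y) else 1 / 2)
  else 1 - y / (2 * x).

Definition cst (alpha : R) : R :=
  (1 - alpha) ^ 2 / alpha + alpha ^ 2 / (1 - alpha).

Definition S (alpha XA XB sigma : R) : R :=
  let r := XA / XB in
  if Rlt_dec sigma (alpha / (1 - alpha)) then
    sigma ^ 2 * (cst alpha * sigma - r)
  else if Rlt_dec sigma ((1 - alpha) / alpha) then
    alpha ^ 2 / (1 - alpha) * (sigma ^ 3 - r) + alpha * sigma * (1 - r * sigma)
  else sigma - r * cst alpha.

Definition piB (alpha sigma : R) : R :=
  if Rlt_dec sigma (alpha / (1 - alpha)) then 1 - sigma / 2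
  else if Rlt_dec sigma ((1 - alpha) / alpha) then
    1 - alpha - alpha * sigma / 2 + alpha ^ 2 / (2 * sigma * (1 - alpha))
  else cst alpha / (2 * sigma).

Inductive bf := bf1 | bf2.

Definition vA (alpha : R) (b : bf) : R :=
  match b with bf1 => alpha | bf2 => 1 - alpha end.
Definition vB (alpha : R) (b : bf) : R :=
  match b with bf1 => 1 - alpha | bf2 => alpha end.

Definition uA_M (alpha XA XB : R) (b : bf) (p : R) : R :=
  vA alpha b + (1 - vA alpha b) * L (XA - p) (XB - p).
Definition uA_W (alpha XA XB : R) (b : bf) (p : R) : R :=
  (1 - vA alpha b) * L XA (XB - p).

(* A's response: true = M (match), false = W (withdraw) *)
Definition respA_M (alpha XA XB : R) (b : bf) (p : R) : bool :=
  if Rle_dec p XA then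
    (if Rlt_dec (uA_W alpha XA XB b p) (uA_M alpha XA XB b p) then true else false)
  else false.

Definition uB (alpha XA XB : R) (b : bf) (p : R) : R :=
  if respA_M alpha XA XB b p then (1 - vB alpha b) * L (XB - p) (XA - p)
  else vB alpha b + (1 - vB alpha b) * L (XB - p) XA.

From Stdlib Require Import Reals Lra.
Open Scope R_scope.

(* S is continuous, nonpositive at alpha / (1 - alpha) and positive far to the
   right, so it has a largest zero sigma0; pi_B is nonincreasing in sigma, so
   sigma0 minimises pi_B over the zeros of S.  On battlefield 2, matching
   guarantees A at least 1 - alpha while withdrawing yields at most alpha, so A
   matches and B gets at most (1 - alpha) X_B / (2 X_A), which is strictly below
   pi_B at every zero of S. *)

Lemma continuity_pt_pos_locally (f : R -> R) (x : R) :
  continuity_pt f x -> 0 < f x ->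
  exists d, 0 < d /\ forall y, Rabs (y - x) < d -> 0 < f y.
Proof.
  intros Hf Hx.
  destruct (Hf (f x) Hx) as [d [Hd Hnear]].
  exists d; split; [exact Hd|]; intros y Hy.
  destruct (Req_dec y x) as [->|Hyx]; [exact Hx|].
  assert (Hdist : Rdist (f y) (f x) < f x)
    by (apply Hnear; split; [split; [exact I| congruence]| exact Hy]).
  apply Rabs_def2 in Hdist; lra.
Qed.

Lemma continuity_pt_if_lt (a : R) (f g : R -> R) (x : R) :
  continuity_pt f x -> continuity_pt g x -> f a = g a ->
  continuity_pt (fun y => if Rlt_dec y a then f y else g y) x.
Proof.
  intros Hf Hg Hfga.
  destruct (Rtotal_order x a) as [Hxa|[<-|Hxa]].
  - apply (continuity_pt_locally_ext f _ (a - x)); [lra| |exact Hf].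
    intros y Hy; apply Rabs_def2 in Hy.
    destruct (Rlt_dec y a); [reflexivity| lra].
  - intros eps Heps.
    destruct (Hf eps Heps) as [df [Hdf Hnf]]; destruct (Hg eps Heps) as [dg [Hdg Hng]].
    exists (Rmin df dg); split; [apply Rmin_pos; lra|].
    intros y [Hy Hyd]; simpl.
    assert (Hyf := Rlt_le_trans _ _ _ Hyd (Rmin_l df dg)).
    assert (Hyg := Rlt_le_trans _ _ _ Hyd (Rmin_r df dg)).
    destruct (Rlt_dec x x) as [Hxx|_]; [lra|].
    destruct (Rlt_dec y x); [rewrite <- Hfga; apply Hnf| apply Hng]; tauto.
  - apply (continuity_pt_locally_ext g _ (x - a)); [lra| |exact Hg].
    intros y Hy; apply Rabs_def2 in Hy.
    destruct (Rlt_dec y a); [lra| reflexivity].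
Qed.

Lemma antitone_if_lt (lo a : R) (f g : R -> R) :
  (forall u t, lo < u -> u <= t -> f t <= f u) ->
  (forall u t, a <= u -> u <= t -> g t <= g u) ->
  g a <= f a ->
  forall u t, lo < u -> u <= t ->
    (if Rlt_dec t a then f t else g t) <= (if Rlt_dec u a then f u else g u).
Proof.
  intros Hf Hg Hgfa u t Hu Hut.
  destruct (Rlt_dec t a); destruct (Rlt_dec u a); try lra.
  - apply Hf; lra.
  - assert (g t <= g a) by (apply Hg; lra).
    assert (f a <= f u) by (apply Hf; lra).
    lra.
  - apply Hg; lra.
Qed.

Lemma continuous_largest_zero (f : R -> R) (x0 M : R) :
  continuity f -> f x0 <= 0 -> (forall x, M < x -> 0 < f x) ->
  exists s, x0 <= s /\ f s = 0 /\ forall y, f y = 0 -> y <= s.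
Proof.
  intros Hf Hx0 HM.
  set (E := fun x => x0 <= x /\ f x <= 0).
  assert (HEM : is_upper_bound E M).
  { intros x [_ Hx]; destruct (Rle_lt_dec x M) as [|HxM]; [assumption|].
    specialize (HM x HxM); lra. }
  destruct (completeness E) as [s [Hub Hlub]].
  { exists M; exact HEM. }
  { exists x0; split; [lra| exact Hx0]. }
  assert (Hs : x0 <= s) by (apply Hub; split; [lra| exact Hx0]).
  assert (Hfs : f s = 0).
  { destruct (Rtotal_order (f s) 0) as [Hneg|[Hz|Hpos]]; [exfalso| exact Hz| exfalso].
    - destruct (continuity_pt_pos_locally (- f)%F s (continuity_pt_opp f s (Hf s)))
        as [d [Hd Hnear]]; [unfold opp_fct; lra|].
      assert (HEd : E (s + d / 2)).
      { split; [lra|].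
        assert (H := Hnear (s + d / 2) ltac:(rewrite Rabs_right; lra)).
        unfold opp_fct in H; lra. }
      apply Hub in HEd; lra.
    - destruct (continuity_pt_pos_locally f s (Hf s) Hpos) as [d [Hd Hnear]].
      assert (s <= s - d / 2); [|lra].
      apply Hlub; intros x [Hx Hfx].
      destruct (Rle_lt_dec x (s - d / 2)) as [|Hxs]; [assumption|].
      assert (x <= s) by (apply Hub; split; assumption).
      assert (0 < f x) by (apply Hnear, Rabs_def1; lra).
      lra. }
  exists s; split; [exact Hs|]; split; [exact Hfs|].
  intros y Hy; destruct (Rle_lt_dec y x0); [lra|].
  apply Hub; split; lra.
Qed.

Lemma L_bounds (x y : R) : 0 <= x -> 0 <= y -> 0 <= L x y <= 1.
Proof.
  intros Hx Hy; unfold L.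
  destruct (Rle_dec x y).
  - destruct (Rlt_dec 0 y); [|lra].
    split; [apply Rmult_le_pos; [lra| left; apply Rinv_0_lt_compat; lra]|].
    apply Rmult_le_reg_r with (2 * y); [lra|]; field_simplify; lra.
  - assert (0 <= y / (2 * x) <= 1); [|lra].
    split; [apply Rmult_le_pos; [lra| left; apply Rinv_0_lt_compat; lra]|].
    apply Rmult_le_reg_r with (2 * x); [lra|]; field_simplify; lra.
Qed.

Lemma L_sub_le (x y p : R) : 0 <= p <= x -> x <= y -> 0 < y ->
  L (x - p) (y - p) <= x / (2 * y).
Proof.
  intros Hp Hxy Hy; unfold L.
  destruct (Rle_dec (x - p) (y - p)) as [_|]; [|lra].
  destruct (Rlt_dec 0 (y - p)).
  - apply Rmult_le_reg_r with (2 * y * (y - p)); [nra|].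
    field_simplify; [nra| lra| lra].
  - replace y with x by lra; right; field; lra.
Qed.

Lemma cst_pos (alpha : R) : 0 < alpha < 1 -> 0 < cst alpha.
Proof.
  intros Hal; unfold cst.
  assert (0 < (1 - alpha) ^ 2 / alpha) by (apply Rdiv_lt_0_compat; nra).
  assert (0 < alpha ^ 2 / (1 - alpha)) by (apply Rdiv_lt_0_compat; nra).
  lra.
Qed.

Section Game.
Variables alpha XA XB : R.
Hypothesis Halpha : 0 < alpha < 1 / 2.

Let a := alpha / (1 - alpha).
Let b := (1 - alpha) / alpha.
Let c := cst alpha.
Let piB_mid y := 1 - alpha - alpha * y / 2 + alpha ^ 2 / (2 * y * (1 - alpha)).

Lemma breakpoints_pos_lt : 0 < a /\ a < b.
Proof.
  unfold a, b; split; [apply Rdiv_lt_0_compat; lra|].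
  apply Rmult_lt_reg_r with (alpha * (1 - alpha)); [nra|].
  field_simplify; nra.
Qed.

Lemma S_continuous : continuity (S alpha XA XB).
Proof.
  destruct breakpoints_pos_lt as [_ Hab].
  intro x; unfold S; cbv zeta; set (r := XA / XB).
  apply continuity_pt_if_lt; [reg| apply continuity_pt_if_lt; [reg| reg|]|].
  - unfold cst; field; lra.
  - fold a b; destruct (Rlt_dec a b); [|lra].
    unfold a, cst; field; lra.
Qed.

Lemma S_at_a_nonpos : 0 < XB <= XA -> S alpha XA XB a <= 0.
Proof.
  intros HX; destruct breakpoints_pos_lt as [Ha Hab].
  assert (Hr : 1 <= XA / XB)
    by (apply Rmult_le_reg_r with XB; [lra|]; field_simplify; lra).
  (* c * a = 1 - alpha + alpha ^ 3 / (1 - alpha) ^ 2, at most 1 iff alpha <= 1/2 *)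
  assert (Hca : c * a <= 1).
  { unfold c, a, cst; apply Rmult_le_reg_r with ((1 - alpha) ^ 2); [nra|].
    field_simplify; [nra| split; lra]. }
  assert (HSa : S alpha XA XB a = a ^ 2 * (c * a - XA / XB)).
  { unfold S; cbv zeta; fold a b.
    destruct (Rlt_dec a a); [lra|]; destruct (Rlt_dec a b); [|lra].
    unfold c, a, cst; field; lra. }
  rewrite HSa; nra.
Qed.

Lemma S_pos_beyond : 0 < XB <= XA ->
  forall x, b + XA / XB * c < x -> 0 < S alpha XA XB x.
Proof.
  intros HX x Hx; destruct breakpoints_pos_lt as [Ha Hab].
  assert (0 <= XA / XB * c)
    by (apply Rmult_le_pos; [apply Rlt_le, Rdiv_lt_0_compat; lra| apply Rlt_le, cst_pos; lra]).
  unfold S; cbv zeta; fold a b c.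
  destruct (Rlt_dec x a); [lra|]; destruct (Rlt_dec x b); lra.
Qed.

Lemma S_largest_zero : 0 < XB <= XA ->
  exists s, 0 < s /\ S alpha XA XB s = 0 /\
    forall y, S alpha XA XB y = 0 -> y <= s.
Proof.
  intros HX; destruct breakpoints_pos_lt as [Ha _].
  destruct (continuous_largest_zero (S alpha XA XB) a (b + XA / XB * c))
    as [s [Has Hs]].
  - exact S_continuous.
  - exact (S_at_a_nonpos HX).
  - exact (S_pos_beyond HX).
  - exists s; split; [lra| exact Hs].
Qed.

Lemma piB_mid_antitone u t : 0 < u -> u <= t -> piB_mid t <= piB_mid u.
Proof.
  intros Hu Hut; unfold piB_mid.
  assert (Hk : 0 < alpha ^ 2 / (2 * (1 - alpha))) by (apply Rdiv_lt_0_compat; nra).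
  assert (Hinv : forall y, 0 < y ->
    alpha ^ 2 / (2 * y * (1 - alpha)) = alpha ^ 2 / (2 * (1 - alpha)) * / y)
    by (intros; field; lra).
  rewrite (Hinv t), (Hinv u) by lra.
  assert (/ t <= / u) by (apply Rinv_le_contravar; lra).
  nra.
Qed.

Lemma piB_antitone u t : 0 < u -> u <= t -> piB alpha t <= piB alpha u.
Proof.
  destruct breakpoints_pos_lt as [Ha Hab].
  apply (antitone_if_lt 0 a (fun y => 1 - y / 2)
           (fun y => if Rlt_dec y b then piB_mid y else c / (2 * y))).
  - intros; lra.
  - intros v w Hv Hvw.
    apply (antitone_if_lt 0 b piB_mid (fun y => c / (2 * y))); [| |right| |]; try lra.
    + exact piB_mid_antitone.
    + intros; apply Rmult_le_compat_l; [apply Rlt_le, cst_pos; lra|].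
      apply Rinv_le_contravar; lra.
    + unfold piB_mid, c, b, cst; field; lra.
  - destruct (Rlt_dec a b); [|lra].
    right; unfold piB_mid, a; field; lra.
Qed.

Lemma piB_gt_at_zero : 0 < XB <= XA ->
  forall y, 0 < y -> S alpha XA XB y = 0 ->
    (1 - alpha) * (XB / (2 * XA)) < piB alpha y.
Proof.
  intros HX y Hy HSy; destruct breakpoints_pos_lt as [Ha Hab].
  assert (Hq : 0 < XB / (2 * XA) <= 1 / 2).
  { split; [apply Rdiv_lt_0_compat; lra|].
    apply Rmult_le_reg_r with (2 * XA); [lra|]; field_simplify; lra. }
  assert (Ha1 : a < 1)
    by (unfold a; apply Rmult_lt_reg_r with (1 - alpha); [lra|]; field_simplify; lra).
  unfold piB, S in *; cbv zeta in HSy; fold a b c in HSy; fold a b c piB_mid.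
  destruct (Rlt_dec y a); [nra|].
  destruct (Rlt_dec y b).
  - assert (Hmid : piB_mid b <= piB_mid y) by (apply piB_mid_antitone; lra).
    assert (Hb : piB_mid b = (1 - alpha) / 2 + alpha ^ 3 / (2 * (1 - alpha) ^ 2))
      by (unfold piB_mid, b; field; lra).
    assert (0 < alpha ^ 3 / (2 * (1 - alpha) ^ 2))
      by (apply Rdiv_lt_0_compat; [apply pow_lt| apply Rmult_lt_0_compat; [| apply pow_lt]]; lra).
    apply Rlt_le_trans with (piB_mid b); [rewrite Hb; nra| exact Hmid].
  - assert (Hy' : y = XA / XB * c) by lra.
    assert (Hc : 0 < c) by (apply cst_pos; lra).
    replace (c / (2 * y)) with (XB / (2 * XA))
      by (rewrite Hy'; field; repeat split; lra).
    nra.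
Qed.

Lemma respA_M_bf2 p : 0 <= p <= XB -> XB <= XA ->
  respA_M alpha XA XB bf2 p = true.
Proof.
  intros Hp HX; unfold respA_M.
  destruct (Rle_dec p XA); [|lra].
  destruct (Rlt_dec (uA_W alpha XA XB bf2 p) (uA_M alpha XA XB bf2 p)) as [|Hn];
    [reflexivity| exfalso; apply Hn].
  unfold uA_W, uA_M; simpl.
  assert (HW := L_bounds XA (XB - p) ltac:(lra) ltac:(lra)).
  assert (HM := L_bounds (XA - p) (XB - p) ltac:(lra) ltac:(lra)).
  nra.
Qed.

Lemma uB_bf2_le : 0 < XB <= XA -> forall p, 0 <= p <= XB ->
  uB alpha XA XB bf2 p <= (1 - alpha) * (XB / (2 * XA)).
Proof.
  intros HX p Hp; unfold uB.
  rewrite respA_M_bf2 by lra; simpl.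
  apply Rmult_le_compat_l; [lra|].
  apply L_sub_le; lra.
Qed.

End Game.

Theorem lemma3 (alpha XA XB p : R) :
  0 < alpha < 1 / 2 -> 0 < XB <= XA -> 0 <= p <= XB ->
  exists sigma0 : R,
    0 < sigma0 /\ S alpha XA XB sigma0 = 0 /\
    (forall sigma, 0 < sigma -> S alpha XA XB sigma = 0 ->
       piB alpha sigma0 <= piB alpha sigma) /\
    uB alpha XA XB bf2 p < piB alpha sigma0.
Proof.
  intros Halpha HX Hp.
  destruct (S_largest_zero alpha XA XB Halpha HX) as [s [Hs [HSs Hmax]]].
  exists s; split; [exact Hs|]; split; [exact HSs|]; split.
  - intros sigma Hsigma HSsigma.
    exact (piB_antitone alpha Halpha sigma s Hsigma (Hmax sigma HSsigma)).
  - apply Rle_lt_trans with ((1 - alpha) * (XB / (2 * XA))).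
    + exact (uB_bf2_le alpha XA XB Halpha HX p Hp).
    + exact (piB_gt_at_zero alpha XA XB Halpha HX s Hs HSs).
Qed.
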